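(* Every regular embedding $|\psi\rangle$ of the randomized one-out-of-two oblivious transfer $P^{\mathrm{OT}}_{X,Y}$ has leakage $\Delta_\psi(P^{\mathrm{OT}}_{X,Y})\ge\tfrac12$. Among regular embeddings, the leakage is minimized by the canonical embedding.
   Context: $P^{\mathrm{OT}}_{X,Y}$ is the distribution with Alice's output $X=(x_0,x_1)\in\{0,1\}^2$ and Bob's output $Y=(c,y)\in\{0,1\}^2$, $P((x_0,x_1),(c,y))=\tfrac18$ if $y=x_c$ and $0$ otherwise. A regular embedding of a distribution $P_{X,Y}$ is a state $\sum_{x,y}e^{i\theta(x,y)}\sqrt{P_{X,Y}(x,y)}|x\rangle_A|y\rangle_B$ for a real function $\theta$ (computational bases indexed by outcomes); the canonical embedding has $\theta\equiv0$. Its leakage is $\Delta_\psi(P_{X,Y})=\max\{S(X;B)-I(X;Y),\,S(A;Y)-I(X;Y)\}$, where $X$ (resp. $Y$) is the outcome of measuring $A$ (resp. $B$) in the computational basis, $S(X;B)$ is the quantum mutual information $S(X)+S(B)-S(XB)$ (von Neumann entropy) of the state after measuring $A$, and similarly for $S(A;Y)$; $I$ is Shannon mutual information. *)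

From Stdlib Require Import Reals.
From HB Require Import structures.
From mathcomp Require Import all_boot all_order all_algebra.
From mathcomp Require Import spectral.
From mathcomp.real_closed Require Import complex.
From mathcomp Require Import Rstruct.

Set Implicit Arguments.
Unset Strict Implicit.
Unset Printing Implicit Defensive.

Import Order.TTheory GRing.Theory Num.Theory.
Local Open Scope ring_scope.

Notation C := (R[i]).

(* logarithm in base 2 (bits); with Stdlib's convention ln x = 0 for x <= 0,
   so eta 0 = 0 as usual *)
Definition log2 (x : R) : R := (ln x / ln 2)%R.
Definition eta (x : R) : R := x * log2 x.

Definition shannon (T : finType) (p : T -> R) : R := - \sum_(t : T) eta (p t).

Definition marg1 (X Y : finType) (P : X -> Y -> R) (x : X) : R := \sum_(y : Y) P x y.
Definition marg2 (X Y : finType) (P : X -> Y -> R) (y : Y) : R := \sum_(x : X) P x y.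

Definition mutual_info (X Y : finType) (P : X -> Y -> R) : R :=
  shannon (marg1 P) + shannon (marg2 P) - shannon (fun xy : (X * Y)%type => P xy.1 xy.2).

(* an operator on C^T, given by its matrix entries in the computational basis *)
Definition op (T : finType) := T -> T -> C.

Definition opmx (T : finType) (rho : op T) : 'M[C]_#|T| :=
  \matrix_(i, j) rho (enum_val i) (enum_val j).

(* von Neumann entropy: -sum_i lambda_i log2 lambda_i over the eigenvalues of rho
   (spectral decomposition of the (Hermitian, hence normal) matrix of rho) *)
Definition vN_entropy (T : finType) (rho : op T) : R :=
  - \sum_(i < #|T|) eta (complex.Re (spectral_diag (opmx rho) 0 i)).

Definition proj (T : finType) (psi : T -> C) : op T :=
  fun a b => psi a * (psi b)^*.

Definition ptraceB (X Y : finType) (rho : op (X * Y)%type) : op X :=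
  fun x x' => \sum_(y : Y) rho (x, y) (x', y).
Definition ptraceA (X Y : finType) (rho : op (X * Y)%type) : op Y :=
  fun y y' => \sum_(x : X) rho (x, y) (x, y').

(* non-selective measurement of A (resp. B) in the computational basis *)
Definition measureA (X Y : finType) (rho : op (X * Y)%type) : op (X * Y)%type :=
  fun a b => if a.1 == b.1 then rho a b else 0.
Definition measureB (X Y : finType) (rho : op (X * Y)%type) : op (X * Y)%type :=
  fun a b => if a.2 == b.2 then rho a b else 0.

Definition qmutual_info (X Y : finType) (rho : op (X * Y)%type) : R :=
  vN_entropy (ptraceB rho) + vN_entropy (ptraceA rho) - vN_entropy rho.

Definition regular_embedding (X Y : finType) (P : X -> Y -> R) (theta : X -> Y -> R)
  : (X * Y)%type -> C :=
  fun xy => (cos (theta xy.1 xy.2) +i* sin (theta xy.1 xy.2))%C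
            * (sqrt (P xy.1 xy.2))%:C%C.

Definition leakage (X Y : finType) (P : X -> Y -> R) (psi : (X * Y)%type -> C) : R :=
  Num.max (qmutual_info (measureA (proj psi)) - mutual_info P)
          (qmutual_info (measureB (proj psi)) - mutual_info P).

(* Alice: (x0, x1); Bob: (c, y); P = 1/8 if y = x_c, else 0 *)
Definition P_OT (x : bool * bool) (cy : bool * bool) : R :=
  if cy.2 == (if cy.1 then x.2 else x.1) then 1 / 8 else 0.

From Pilot Require Import Defs.
From Stdlib Require Import Reals Lra Psatz.
From HB Require Import structures.
From mathcomp Require Import all_boot all_order all_algebra spectral.
From mathcomp.real_closed Require Import complex.
From mathcomp Require Import Rstruct.
From mathcomp Require ring lra.

(* Measuring A in the computational basis leaves a block-diagonal state whose four
   blocks are pure of weight 1/4, because the marginals of P_OT are uniform; so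
   S(XB) = S(X) and S(X;B) = S(rho_B), Bob's reduced state.  Likewise
   S(A;Y) = S(rho_A), while I(X;Y) = 1.

   Whatever the phases, rho_B has diagonal 1/4, vanishes between the two outcomes
   of one choice bit c, and its entries across different choice bits have modulus
   1/8.  Hence K = rho_B - 1/4 satisfies tr K = 0, tr K^2 = 1/8, tr K^3 = 0, and
   conjugation by the sign (-1)^c maps rho_B to 1/2 - rho_B, so the spectrum lies
   in [0, 1/2].  On [0, 1/2], -eta is bounded below by a cubic in r - 1/4 whose
   sum over the spectrum only involves these three moments and equals 3/2.  Thus
   S(rho_B) >= 3/2 and the leakage is at least 1/2.

   For the canonical embedding K^3 = K/16 for both reduced states, so their
   spectra are {0, 1/4, 1/4, 1/2}, both entropies equal 3/2, and the leakage is
   exactly 1/2. *)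

Set Implicit Arguments.
Unset Strict Implicit.
Unset Printing Implicit Defensive.

Section LnQuadraticBound.
Local Open Scope R_scope.

Let ln2_lt_1 : ln 2 < 1.
Proof.
rewrite -(ln_exp 1); apply: ln_increasing; first lra.
have := exp_ineq1 1; lra.
Qed.

Let c := 1 - ln 2.
Let g u := u - c * u ^ 2 - ln (1 + u).

Let g_mean_value a b : -1 < a -> a < b ->
  exists x, a < x < b /\ (g b - g a) * (1 + x) = x * (1 - 2 * c * (1 + x)) * (b - a).
Proof.
move=> a_gt b_gt.
have [x [gE x_ab]] : exists x, g b - g a = (1 - 2 * c * x - / (1 + x)) * (b - a) /\ a < x < b.
  apply: MVT_cor2 => // t t_ab.
  have d1 : derivable_pt_lim (fun u => 1 + u) t 1.
    have := derivable_pt_lim_plus _ _ t _ _ (derivable_pt_lim_const 1 t) (derivable_pt_lim_id t).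
    by rewrite Rplus_0_l.
  have dln := derivable_pt_lim_comp _ _ _ _ _ d1 (derivable_pt_lim_ln (1 + t) ltac:(lra)).
  have dsq := derivable_pt_lim_scal _ c t _ (derivable_pt_lim_pow t 2).
  have := derivable_pt_lim_minus _ _ _ _ _
    (derivable_pt_lim_minus _ _ _ _ _ (derivable_pt_lim_id t) dsq) dln.
  congr derivable_pt_lim; simpl; field; lra.
exists x; split=> //; rewrite gE; field; lra.
Qed.

(* [g' u] has the sign of [u * (1 - 2 c (1 + u))] and [g 0 = g 1 = 0]. *)
Let ln_le_quadratic_R x : 0 < x <= 2 -> ln x <= x - 1 - (1 - ln 2) * (x - 1) ^ 2.
Proof.
move=> [x_gt0 x_le2]; set u := x - 1.
have -> : x = 1 + u by rewrite /u; ring.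
have u_gt : -1 < u by rewrite /u; lra.
have u_le : u <= 1 by rewrite /u; lra.
clearbody u; clear x x_gt0 x_le2.
have ln2_gt_half := ln_lt_2; have ln2_lt1 := ln2_lt_1.
have g0 : g 0 = 0 by rewrite /g Rplus_0_r ln_1; ring.
have g1 : g 1 = 0 by rewrite /g (_ : 1 + 1 = 2); [rewrite /c; ring|lra].
suff : 0 <= g u by rewrite /g /c; lra.
have [u_lt0|[->|u_gt0]] := Rtotal_order u 0.
- have [x [x_u0 E]] := g_mean_value u_gt u_lt0; rewrite g0 in E.
  have : x * (1 - 2 * c * (1 + x)) < 0 by rewrite /c; nra.
  nra.
- by rewrite g0; lra.
- have [u_small|u_big] := Rle_lt_dec (2 * c * (1 + u)) 1.
  + have [x [x_0u E]] := g_mean_value (ltac:(lra) : -1 < 0) u_gt0; rewrite g0 in E.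
    have : 0 <= x * (1 - 2 * c * (1 + x)) by nra.
    nra.
  + have [u_lt1|->] := Rle_lt_or_eq_dec u 1 u_le; last lra.
    have [x [x_u1 E]] := g_mean_value u_gt u_lt1; rewrite g1 in E.
    have : x * (1 - 2 * c * (1 + x)) < 0 by nra.
    nra.
Qed.

Lemma ln_le_quadratic x : (0 < x <= 2 -> ln x <= x - 1 - (1 - ln 2) * (x - 1) ^+ 2)%R.
Proof.
move=> /andP [/RltP x_gt0 /RleP x_le2]; apply/RleP; rewrite -RpowE.
exact: ln_le_quadratic_R.
Qed.

End LnQuadraticBound.

Import ring lra.
Import Order.TTheory GRing.Theory Num.Theory.
Local Open Scope ring_scope.
Local Open Scope sesquilinear_scope.
Local Notation "x ^*" := (Num.conj x) : ring_scope.
Local Notation "x %:C" := (real_complex R x) : ring_scope.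

(** * Entropy of a real spectrum *)

Lemma ln2_gt0 : 0 < ln 2.
Proof. have /RltP ln2_gt_half := ln_lt_2; have : 2^-1 < ln 2 := ln2_gt_half; lra. Qed.

Lemma log2_exp2 k : log2 (2 ^+ k) = k%:R.
Proof.
rewrite /log2 -(RpowE 2 k) ln_pow; last exact: Rlt_0_2.
by rewrite INRE RmultE mulfK // gt_eqF // ln2_gt0.
Qed.

Lemma log2V x : 0 < x -> log2 (x^-1) = - log2 x.
Proof. by move=> /RltP x_gt0; rewrite /log2 -RinvE ln_Rinv // RoppE mulNr. Qed.

Lemma eta_exp2N k : Defs.eta ((2 ^+ k)^-1) = - (k%:R / 2 ^+ k).
Proof. by rewrite /Defs.eta RmultE log2V ?exprn_gt0 // log2_exp2 mulrN mulrC. Qed.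

Lemma eta0 : Defs.eta 0 = 0.
Proof. by rewrite /Defs.eta RmultE mul0r. Qed.

(* Put [x = 4 r] in [ln_le_quadratic]; the cubic meets [- eta] at [r = 0, 1/4, 1/2]. *)
Lemma neg_eta_ge_cubic r : 0 <= r <= 2^-1 ->
  2^-1 + (2 * ln 2 - 1) / ln 2 * (r - 4^-1) - 4 * (r - 4^-1) ^+ 2
    + 16 * (1 - ln 2) / ln 2 * (r - 4^-1) ^+ 3 <= - Defs.eta r.
Proof.
move=> /andP [r_ge0 r_le]; have L_gt0 := ln2_gt0.
have L_neq0 : ln 2 != 0 by rewrite gt_eqF.
rewrite /Defs.eta /log2 RmultE.
have [->|r_neq0] := eqVneq r 0.
  by rewrite mul0r oppr0 le_eqVlt; apply/orP; left; apply/eqP; field.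
have r_gt0 : 0 < r by rewrite lt_def r_neq0.
have ln4 : ln 4%R = 2 * ln 2.
  rewrite (_ : 4%R = 2 * 2)%R; last by rewrite -natrM.
  rewrite ln_mult; [|exact: Rlt_0_2|exact: Rlt_0_2].
  by change (ln 2 + ln 2 = 2 * ln 2); rewrite mulr_natl mulr2n.
have := @ln_le_quadratic (4 * r)%R.
rewrite ln_mult ?ln4; [|by apply/RltP; rewrite R0E; lra|exact/RltP].
rewrite RplusE => /(_ ltac:(lra)) ln_r.
have -> : - (r * (ln r / ln 2)) = r * - ln r / ln 2 by field.
set u := 4 * r - 1 in ln_r.
have -> : 2^-1 + (2 * ln 2 - 1) / ln 2 * (r - 4^-1) - 4 * (r - 4^-1) ^+ 2
    + 16 * (1 - ln 2) / ln 2 * (r - 4^-1) ^+ 3 = r * (2 * ln 2 - u + (1 - ln 2) * u ^+ 2) / ln 2.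
  by rewrite /u; field.
by rewrite ler_pM2r ?invr_gt0 // ler_pM2l //; lra.
Qed.

Lemma sum_neg_eta_ge (I : finType) (r : I -> R) : #|I| = 4 ->
  (forall i, 0 <= r i <= 2^-1) -> \sum_i (r i - 4^-1) = 0 ->
  \sum_i (r i - 4^-1) ^+ 2 = 8^-1 -> \sum_i (r i - 4^-1) ^+ 3 = 0 ->
  3 / 2 <= - \sum_i Defs.eta (r i).
Proof.
move=> card4 r_bounds m1 m2 m3.
rewrite -sumrN; apply: le_trans (ler_sum _ (fun i _ => neg_eta_ge_cubic (r_bounds i))).
rewrite big_split sumrB big_split /= -!mulr_sumr m1 m2 m3 sumr_const card4 !mulr0.
lra.
Qed.

Lemma neg_eta_three_levels r : (r - 4^-1) ^+ 3 = 16^-1 * (r - 4^-1) ->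
  - Defs.eta r = 2^-1 + (r - 4^-1) - 4 * (r - 4^-1) ^+ 2.
Proof.
move=> cubic.
have /eqP : r * (r - 4^-1) * (r - 2^-1) = 0.
  have -> : r * (r - 4^-1) * (r - 2^-1) = (r - 4^-1) ^+ 3 - 16^-1 * (r - 4^-1) by field.
  by rewrite cubic subrr.
rewrite !mulf_eq0 !subr_eq0 -orbA => /or3P [] /eqP ->.
- by rewrite eta0; field.
- by rewrite (_ : 4 = 2 ^+ 2) ?eta_exp2N -?natrX //; field.
- by rewrite (_ : 2 = 2 ^+ 1) ?eta_exp2N -?natrX //; field.
Qed.

Lemma sum_neg_eta_eq (I : finType) (r : I -> R) : #|I| = 4 ->
  (forall i, (r i - 4^-1) ^+ 3 = 16^-1 * (r i - 4^-1)) -> \sum_i (r i - 4^-1) = 0 ->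
  \sum_i (r i - 4^-1) ^+ 2 = 8^-1 -> - \sum_i Defs.eta (r i) = 3 / 2.
Proof.
move=> card4 r_levels m1 m2.
rewrite -sumrN (eq_bigr _ (fun i _ => neg_eta_three_levels (r_levels i))).
by rewrite sumrB big_split /= -mulr_sumr m1 m2 sumr_const card4; lra.
Qed.

(** * Spectral calculus for Hermitian matrices *)

Section SpectralCalculus.
Variables (n : nat) (M : 'M[R[i]]_n).
Hypothesis M_herm : M ^t* = M.

Let U := spectralmx M.
Local Notation d := (spectral_diag M).

Let U_unitary : U *m U ^t* = 1%:M.
Proof. exact/unitarymxP/spectral_unitarymx. Qed.

Let Ut_unitary : U ^t* *m U = 1%:M.
Proof. by rewrite -invmx_unitary ?spectral_unitarymx // mulVmx // spectral_unit. Qed.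

Let diagonalize (X : 'M[R[i]]_n) := U *m X *m U ^t*.

Let diagonalizeM X Y : diagonalize (X *m Y) = diagonalize X *m diagonalize Y.
Proof. by rewrite /diagonalize !mulmxA -[_ *m U ^t* *m U]mulmxA Ut_unitary mulmx1. Qed.

Let diagonalize_affine a b :
  diagonalize (a *: M - b%:M) = diag_mx (\row_i (a * d 0 i - b)).
Proof.
have diagM : diagonalize M = diag_mx d.
  have /orthomx_spectralP {1}-> : M \is normalmx by apply/normalmxP; rewrite M_herm.
  rewrite /diagonalize invmx_unitary ?spectral_unitarymx // -/U.
  by rewrite !mulmxA U_unitary mul1mx -mulmxA U_unitary mulmx1.
rewrite /diagonalize mulmxBr mulmxBl -scalemxAr -scalemxAl -/(diagonalize M) diagM.
rewrite mul_mx_scalar -scalemxAl U_unitary.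
apply/matrixP => i j; rewrite !mxE.
by case: eqP => [->|_]; rewrite ?mulr1n ?mulr0n ?mulr1 ?mulr0 ?subr0.
Qed.

Let diagonalize_affine_expn a b k :
  diagonalize ((a *: M - b%:M) ^+ k) = diag_mx (\row_i (a * d 0 i - b) ^+ k).
Proof.
elim: k => [|k IHk].
  rewrite expr0 /diagonalize -idmxE mulmx1 U_unitary.
  by apply/matrixP => i j; rewrite !mxE expr0.
rewrite exprS diagonalizeM IHk diagonalize_affine mulmx_diag.
by apply/congr1/matrixP => i j; rewrite !mxE exprS.
Qed.

Lemma mxtrace_affine_expn a b k :
  \tr ((a *: M - b%:M) ^+ k) = \sum_i (a * d 0 i - b) ^+ k.
Proof.
have -> : \tr ((a *: M - b%:M) ^+ k) = \tr (diagonalize ((a *: M - b%:M) ^+ k)).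
  by rewrite /diagonalize mxtrace_mulC mulmxA Ut_unitary mul1mx.
by rewrite diagonalize_affine_expn mxtrace_diag; apply: eq_bigr => i _; rewrite mxE.
Qed.

Lemma spectral_affine_expn_eq a b k e :
  (a *: M - b%:M) ^+ k = e *: (a *: M - b%:M) ->
  forall i, (a * d 0 i - b) ^+ k = e * (a * d 0 i - b).
Proof.
move=> /(congr1 diagonalize) + i.
rewrite diagonalize_affine_expn /diagonalize -scalemxAr -scalemxAl -/(diagonalize _).
by rewrite diagonalize_affine => /matrixP/(_ i i); rewrite !mxE eqxx !mulr1n.
Qed.

Lemma spectral_affine_ge0 a b m (A : 'M[R[i]]_(n, m)) :
  a *: M - b%:M = A *m A ^t* -> forall i, 0 <= a * d 0 i - b.
Proof.
move=> /(congr1 diagonalize) + i.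
have -> : diagonalize (A *m A ^t*) = (U *m A) *m (U *m A) ^t*.
  by rewrite /diagonalize trmx_mul map_mxM !mulmxA.
rewrite diagonalize_affine => /matrixP/(_ i i); rewrite !mxE eqxx mulr1n => ->.
by apply: sumr_ge0 => j _; rewrite !mxE mul_conjC_ge0.
Qed.

End SpectralCalculus.

(** * Operators on [C^T] *)

Lemma conj_realC (x : R) : (x%:C)^* = x%:C.
Proof. by rewrite /Num.conj /= oppr0. Qed.

Lemma realC_invn n : ((n%:R)^-1)%:C = (n%:R)^-1 :> R[i].
Proof. by rewrite fmorphV rmorph_nat. Qed.

Section Operators.
Variable T : finType.

Definition opmul (r s : op T) : op T := fun a b => \sum_t r a t * s t b.
Definition opaffine (a b : R[i]) (r : op T) : op T := fun x y => a * r x y - b * (x == y)%:R.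
Definition gram (Z : finType) (f : T -> Z -> R[i]) : op T := fun x y => \sum_z f x z * (f y z)^*.
Definition herm (r : op T) := forall x y, r y x = (r x y)^*.
Definition eigval (rho : op T) (i : 'I_#|T|) : R := complex.Re (spectral_diag (opmx rho) 0 i).

Let sum_enum_val (Z : finType) (F : Z -> R[i]) : \sum_(k < #|Z|) F (enum_val k) = \sum_z F z.
Proof. by rewrite -(big_enum_val (A := Z)) /=; apply: eq_bigl => x; rewrite inE. Qed.

Lemma opmxE (r : op T) i j : opmx r i j = r (enum_val i) (enum_val j).
Proof. by rewrite mxE. Qed.

Lemma eq_opmx (r s : op T) : r =2 s -> opmx r = opmx s.
Proof. by move=> rs; apply/matrixP => i j; rewrite !opmxE rs. Qed.

Lemma eq_vN_entropy (r s : op T) : r =2 s -> vN_entropy r = vN_entropy s.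
Proof. by move=> /eq_opmx rs; rewrite /vN_entropy rs. Qed.

Lemma opmx_mul (r s : op T) : opmx r *m opmx s = opmx (opmul r s).
Proof.
apply/matrixP => i j; rewrite !mxE /opmul.
rewrite -(sum_enum_val (fun t => r (enum_val i) t * s t (enum_val j))).
by apply: eq_bigr => k _; rewrite !opmxE.
Qed.

Lemma opmx_expr2 (r : op T) : opmx r ^+ 2 = opmx (opmul r r).
Proof. by rewrite expr2 -mulmxE opmx_mul. Qed.

Lemma opmx_expr3 (r : op T) : opmx r ^+ 3 = opmx (opmul (opmul r r) r).
Proof. by rewrite exprSr opmx_expr2 -mulmxE opmx_mul. Qed.

Lemma opmx_scale k (r : op T) : k *: opmx r = opmx (fun x y => k * r x y).
Proof. by apply/matrixP => i j; rewrite !mxE. Qed.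

Lemma opmx_affine a b (r : op T) : a *: opmx r - b%:M = opmx (opaffine a b r).
Proof.
apply/matrixP => i j; rewrite !mxE ?opmxE /opaffine (inj_eq enum_val_inj).
by case: eqP; rewrite ?mulr1n ?mulr0n ?mulr1 ?mulr0.
Qed.

Lemma mxtrace_opmx (r : op T) : \tr (opmx r) = \sum_t r t t.
Proof.
rewrite /mxtrace -(sum_enum_val (fun t => r t t)).
by apply: eq_bigr => k _; rewrite opmxE.
Qed.

Lemma opmx_herm (r : op T) : herm r -> (opmx r) ^t* = opmx r.
Proof. by move=> r_herm; apply/matrixP => i j; rewrite !mxE ?opmxE r_herm conjCK. Qed.

Lemma herm_gram (Z : finType) (f : T -> Z -> R[i]) : herm (gram f).
Proof.
move=> x y; rewrite /gram rmorph_sum; apply: eq_bigr => z _.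
by rewrite rmorphM /= conjCK mulrC.
Qed.

Lemma opmx_gram (Z : finType) (f : T -> Z -> R[i]) :
  let F := \matrix_(i < #|T|, j < #|Z|) f (enum_val i) (enum_val j) in
  opmx (gram f) = F *m F ^t*.
Proof.
apply/matrixP => i j; rewrite opmxE /gram !mxE.
rewrite -(sum_enum_val (fun z => f (enum_val i) z * (f (enum_val j) z)^*)).
by apply: eq_bigr => k _; rewrite !mxE.
Qed.

Section GramState.
Variables (Z : finType) (f : T -> Z -> R[i]) (rho : op T).
Hypothesis rho_gram : rho =2 gram f.

Lemma opmx_gram_herm : (opmx rho) ^t* = opmx rho.
Proof. by rewrite (eq_opmx rho_gram) opmx_herm //; apply: herm_gram. Qed.

Let spectral_diag_ge0 i : 0 <= spectral_diag (opmx rho) 0 i.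
Proof.
have E : 1 *: opmx rho - 0%:M = opmx (gram f).
  by rewrite opmx_affine; apply: eq_opmx => x y; rewrite /opaffine mul1r mul0r subr0 rho_gram.
have := spectral_affine_ge0 opmx_gram_herm (etrans E (opmx_gram f)) i.
by rewrite mul1r subr0.
Qed.

Lemma eigvalE i : spectral_diag (opmx rho) 0 i = (eigval rho i)%:C.
Proof. by rewrite (RRe_real (ger0_real (spectral_diag_ge0 i))). Qed.

Lemma eigval_ge0 i : 0 <= eigval rho i.
Proof. by rewrite -ler0c -eigvalE. Qed.

Lemma eigval_moment s k :
  (\sum_i (eigval rho i - s) ^+ k)%:C = \tr (opmx (opaffine 1 s%:C rho) ^+ k).
Proof.
rewrite -opmx_affine (mxtrace_affine_expn opmx_gram_herm) rmorph_sum.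
by apply: eq_bigr => i _; rewrite eigvalE mul1r rmorphXn rmorphB.
Qed.

End GramState.
End Operators.

(** * Entropy of states *)

Lemma vN_entropy_flat (T : finType) (rho : op T) (p : R) : herm rho ->
  opmul rho rho =2 (fun x y => p%:C * rho x y) -> \sum_t rho t t = 1 ->
  vN_entropy rho = - log2 p.
Proof.
move=> /opmx_herm rho_herm rho_sq rho_tr.
set d := spectral_diag (opmx rho).
have shift0 : 1 *: opmx rho - 0%:M = opmx rho by rewrite scale1r raddf0 subr0.
have d_levels i : d 0 i = 0 \/ d 0 i = p%:C.
  have := spectral_affine_expn_eq rho_herm (a := 1) (b := 0) (k := 2) (e := p%:C).
  rewrite shift0 opmx_expr2 opmx_scale => /(_ (eq_opmx rho_sq) i).
  rewrite -/d mul1r subr0 => /eqP.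
  by rewrite expr2 -subr_eq0 -mulrBl mulf_eq0 subr_eq0 => /orP [] /eqP; [right|left].
have d_sum : \sum_i complex.Re (d 0 i) = 1.
  have := mxtrace_affine_expn rho_herm 1 0 1.
  rewrite shift0 expr1 mxtrace_opmx rho_tr => /(congr1 (@complex.Re R)).
  rewrite raddf_sum => tr_Re; rewrite [RHS](_ : 1 = complex.Re 1) // tr_Re.
  by apply: eq_bigr => i _; rewrite mul1r subr0 expr1.
rewrite /vN_entropy (eq_bigr (fun i => complex.Re (d 0 i) * log2 p)).
  by rewrite -mulr_suml d_sum mul1r.
move=> i _; rewrite /Defs.eta RmultE.
by case: (d_levels i) => ->; rewrite ?mul0r.
Qed.

Lemma vN_entropy_dephase (T L : finType) (lab : T -> L) (psi : T -> R[i]) (p : R) :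
  \sum_t psi t * (psi t)^* = 1 ->
  (forall l, \sum_(t | lab t == l) psi t * (psi t)^* = p%:C) ->
  vN_entropy (fun a b => if lab a == lab b then psi a * (psi b)^* else 0) = - log2 p.
Proof.
move=> psi_normed psi_blocks; apply: vN_entropy_flat.
- move=> a b; rewrite eq_sym; case: eqP => _; last by rewrite rmorph0.
  by rewrite rmorphM /= conjCK mulrC.
- move=> a b; rewrite /opmul -(psi_blocks (lab a)) mulr_suml [RHS]big_mkcond /=.
  apply: eq_bigr => t _; case: (eqVneq (lab t) (lab a)) => [-> | _]; last by rewrite mul0r.
  by case: eqP => _; rewrite ?mulr0 // mulrACA [RHS]mulrACA [psi t * _]mulrC.
- by rewrite -[RHS]psi_normed; apply: eq_bigr => t _; rewrite eqxx.
Qed.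

Lemma vN_entropy_uniform_diag (T : finType) (p : R) : #|T|%:R * p = 1 ->
  vN_entropy (fun x y : T => if x == y then p%:C else 0) = - log2 p.
Proof.
move=> tr1; apply: vN_entropy_flat.
- by move=> x y; rewrite eq_sym; case: eqP => _; rewrite ?conj_realC ?rmorph0.
- move=> x y; rewrite /opmul (bigD1 x) //= eqxx big1 ?addr0 // => t t_neq_x.
  by rewrite eq_sym (negPf t_neq_x) mul0r.
- rewrite (eq_bigr (fun _ => p%:C)) => [|t _]; last by rewrite eqxx.
  by rewrite sumr_const -rmorphMn -mulr_natl tr1 rmorph1.
Qed.

Lemma sum_pair (X Y : finType) (V : nmodType) (F : X * Y -> V) :
  \sum_t F t = \sum_x \sum_y F (x, y).
Proof. by rewrite pair_bigA; apply: eq_bigr => -[]. Qed.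

Section UniformMarginal.
Variables (X Y : finType) (psi : X * Y -> R[i]) (p : R).
Hypothesis psi_normed : \sum_t psi t * (psi t)^* = 1.

Let sum_fst (F : X * Y -> R[i]) x : \sum_(t | t.1 == x) F t = \sum_y F (x, y).
Proof.
rewrite big_mkcond sum_pair (bigD1 x) //= [X in _ + X]big1 => [|x' /negPf x'x].
  by rewrite addr0; apply: eq_bigr => y _; rewrite eqxx.
by apply: big1 => y _; rewrite x'x.
Qed.

Let sum_snd (F : X * Y -> R[i]) y : \sum_(t | t.2 == y) F t = \sum_x F (x, y).
Proof.
rewrite big_mkcond sum_pair exchange_big (bigD1 y) //= [X in _ + X]big1 => [|y' /negPf y'y].
  by rewrite addr0; apply: eq_bigr => x _; rewrite eqxx.
by apply: big1 => x _; rewrite y'y.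
Qed.

(* The measured state is flat, and so is Alice's marginal: their entropies cancel. *)
Lemma qmutual_info_measureA_uniform :
  (forall x, \sum_y psi (x, y) * (psi (x, y))^* = p%:C) ->
  qmutual_info (measureA (proj psi)) = vN_entropy (ptraceA (proj psi)).
Proof.
move=> marginal.
have card_p : #|X|%:R * p = 1.
  apply: (@complexI R); rewrite rmorph1 -[RHS]psi_normed sum_pair.
  by rewrite (eq_bigr _ (fun x _ => marginal x)) sumr_const rmorphM rmorph_nat mulr_natl.
rewrite /qmutual_info (vN_entropy_dephase (lab := fst) (p := p) psi_normed); last first.
  by move=> x; rewrite sum_fst marginal.
rewrite (@eq_vN_entropy _ (ptraceB _) (fun x x' => if x == x' then p%:C else 0)); last first.
  move=> x x'; rewrite /ptraceB /measureA /proj /=.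
  by case: eqP => [<-|_]; [rewrite marginal|rewrite big1].
rewrite vN_entropy_uniform_diag //.
rewrite (@eq_vN_entropy _ (ptraceA _) (ptraceA (proj psi))); last first.
  by move=> y y'; apply: eq_bigr => x _; rewrite /measureA eqxx.
by rewrite RminusE RplusE; lra.
Qed.

Lemma qmutual_info_measureB_uniform :
  (forall y, \sum_x psi (x, y) * (psi (x, y))^* = p%:C) ->
  qmutual_info (measureB (proj psi)) = vN_entropy (ptraceB (proj psi)).
Proof.
move=> marginal.
have card_p : #|Y|%:R * p = 1.
  apply: (@complexI R); rewrite rmorph1 -[RHS]psi_normed sum_pair exchange_big.
  by rewrite (eq_bigr _ (fun y _ => marginal y)) sumr_const rmorphM rmorph_nat mulr_natl.
rewrite /qmutual_info (vN_entropy_dephase (lab := snd) (p := p) psi_normed); last first.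
  by move=> y; rewrite sum_snd marginal.
rewrite (@eq_vN_entropy _ (ptraceA _) (fun y y' => if y == y' then p%:C else 0)); last first.
  move=> y y'; rewrite /ptraceA /measureB /proj /=.
  by case: eqP => [<-|_]; [rewrite marginal|rewrite big1].
rewrite vN_entropy_uniform_diag //.
rewrite (@eq_vN_entropy _ (ptraceB _) (ptraceB (proj psi))); last first.
  by move=> x x'; apply: eq_bigr => y _; rewrite /measureB eqxx.
by rewrite RminusE RplusE; lra.
Qed.

End UniformMarginal.

Section FourLevelState.
Variables (T Z : finType) (f : T -> Z -> R[i]) (rho : op T).
Hypotheses (card4 : #|T| = 4) (rho_gram : rho =2 gram f).

Local Notation K := (opaffine 1 4^-1 rho).

Let moment_eq k (m : R) :
  \tr (opmx K ^+ k) = m%:C -> \sum_i (eigval rho i - 4^-1) ^+ k = m.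
Proof.
move=> tr_m; apply: (@complexI R).
by rewrite (eigval_moment rho_gram) realC_invn.
Qed.

Let card_spectrum : #|'I_#|T| | = 4.
Proof. by rewrite card_ord. Qed.

Hypotheses (K_tr : \sum_t K t t = 0) (K_tr2 : \sum_t opmul K K t t = 8^-1).

Let moment1 : \sum_i (eigval rho i - 4^-1) = 0.
Proof.
have := @moment_eq 1 0; rewrite expr1 mxtrace_opmx rmorph0 => /(_ K_tr).
by under eq_bigr do rewrite expr1.
Qed.

Let moment2 : \sum_i (eigval rho i - 4^-1) ^+ 2 = 8^-1.
Proof. by apply: moment_eq; rewrite opmx_expr2 mxtrace_opmx realC_invn. Qed.

Lemma vN_entropy_ge_three_halves (Z' : finType) (f' : T -> Z' -> R[i]) :
  opaffine (-1) (- 2^-1) rho =2 gram f' ->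
  \sum_t opmul (opmul K K) K t t = 0 -> 3 / 2 <= vN_entropy rho.
Proof.
move=> upper_gram K_tr3.
apply: (sum_neg_eta_ge card_spectrum _ moment1 moment2) => [i|]; last first.
  by apply: moment_eq; rewrite opmx_expr3 mxtrace_opmx rmorph0.
rewrite (eigval_ge0 rho_gram) /=.
have E : -1 *: opmx rho - (- 2^-1)%:M = opmx (gram f').
  by rewrite opmx_affine (eq_opmx upper_gram).
have := spectral_affine_ge0 (opmx_gram_herm rho_gram) (etrans E (opmx_gram f')) i.
by rewrite (eigvalE rho_gram) mulN1r opprK addrC -realC_invn -rmorphB ler0c subr_ge0.
Qed.

Lemma vN_entropy_eq_three_halves :
  opmul (opmul K K) K =2 (fun x y => 16^-1 * K x y) -> vN_entropy rho = 3 / 2.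
Proof.
move=> K_cube; rewrite /vN_entropy.
apply: (sum_neg_eta_eq card_spectrum _ moment1 moment2) => i.
have := spectral_affine_expn_eq (opmx_gram_herm rho_gram) (a := 1) (b := 4^-1) (k := 3) (e := 16^-1).
rewrite opmx_affine opmx_expr3 opmx_scale => /(_ (eq_opmx K_cube) i).
rewrite (eigvalE rho_gram) mul1r -!realC_invn -rmorphB -rmorphXn -rmorphM.
exact: complexI.
Qed.

End FourLevelState.

(** * Regular embeddings of oblivious transfer *)

Section RegularEmbedding.
Variables (X Y : finType) (P : X -> Y -> R) (theta : X -> Y -> R).
Local Notation psi := (regular_embedding P theta).
Local Notation phase x y := ((cos (theta x y) +i* sin (theta x y))%C : R[i]).

Lemma phase_unit x y : phase x y * (phase x y)^* = 1.
Proof.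
rewrite /Num.conj /=; apply/eqP; rewrite eq_complex /=; apply/andP; split; apply/eqP.
  by have := sin2_cos2 (theta x y); rewrite /Rsqr RplusE !RmultE R1E; lra.
by rewrite mulrN mulrC addNr.
Qed.

Lemma regular_embedding_mulC x y x' y' :
  psi (x, y) * (psi (x', y'))^* =
  phase x y * (phase x' y')^* * (sqrt (P x y) * sqrt (P x' y'))%:C.
Proof. by rewrite /regular_embedding /= rmorphM /= conj_realC mulrACA -rmorphM. Qed.

Lemma regular_embedding_norm2 x y : 0 <= P x y -> psi (x, y) * (psi (x, y))^* = (P x y)%:C.
Proof.
move=> /RleP P_ge0.
by rewrite regular_embedding_mulC phase_unit mul1r -RmultE sqrt_sqrt.
Qed.

End RegularEmbedding.

Definition ot_valid (x y : bool * bool) : bool := y.2 == (if y.1 then x.2 else x.1).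

Lemma P_OTE x y : P_OT x y = if ot_valid x y then 8^-1 else 0.
Proof. by rewrite /P_OT /ot_valid mul1r. Qed.

Lemma P_OT_ge0 x y : 0 <= P_OT x y.
Proof. by rewrite P_OTE; case: ifP => _; rewrite ?invr_ge0. Qed.

Lemma sum_bool2 (V : nmodType) (F : bool * bool -> V) :
  \sum_t F t = F (true, true) + F (true, false) + F (false, true) + F (false, false).
Proof. by rewrite sum_pair !big_bool /= addrA. Qed.

Lemma marg1_P_OT x : marg1 P_OT x = 4^-1.
Proof. by rewrite /marg1 sum_bool2 !P_OTE; case: x => [[] []] /=; field. Qed.

Lemma marg2_P_OT y : marg2 P_OT y = 4^-1.
Proof. by rewrite /marg2 sum_bool2 !P_OTE; case: y => [[] []] /=; field. Qed.

Lemma mutual_info_P_OT : mutual_info P_OT = 1.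
Proof.
have eta4 : Defs.eta 4^-1 = - 2^-1.
  by rewrite (_ : 4 = 2 ^+ 2) ?eta_exp2N -?natrX //; field.
have eta8 : Defs.eta 8^-1 = - (3 / 8).
  by rewrite (_ : 8 = 2 ^+ 3) ?eta_exp2N -?natrX //; field.
rewrite /mutual_info /shannon RminusE RplusE !RoppE.
rewrite (eq_bigr (fun _ => - 2^-1)) => [|x _]; last by rewrite marg1_P_OT eta4.
rewrite [X in _ + - X - _](eq_bigr (fun _ => - 2^-1)) => [|y _]; last by rewrite marg2_P_OT eta4.
rewrite !sumr_const card_prod card_bool sum_pair !sum_bool2 !P_OTE /= eta0 eta8.
lra.
Qed.

Section OTEmbedding.
Variable theta : bool * bool -> bool * bool -> R.
Local Notation psi := (regular_embedding P_OT theta).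
Local Notation phase x y := ((cos (theta x y) +i* sin (theta x y))%C : R[i]).
Local Notation rhoA := (ptraceB (proj psi)).
Local Notation rhoB := (ptraceA (proj psi)).
Local Notation K := (opaffine 1 4^-1 rhoB).

Lemma OT_embedding_marg1 x : \sum_y psi (x, y) * (psi (x, y))^* = (4^-1)%:C.
Proof.
under eq_bigr do rewrite regular_embedding_norm2 ?P_OT_ge0 //.
by rewrite -rmorph_sum -(marg1_P_OT x).
Qed.

Lemma OT_embedding_marg2 y : \sum_x psi (x, y) * (psi (x, y))^* = (4^-1)%:C.
Proof.
under eq_bigr do rewrite regular_embedding_norm2 ?P_OT_ge0 //.
by rewrite -rmorph_sum -(marg2_P_OT y).
Qed.

Lemma OT_embedding_normed : \sum_t psi t * (psi t)^* = 1.
Proof.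
rewrite sum_pair (eq_bigr _ (fun x _ => OT_embedding_marg1 x)) sumr_const card_prod card_bool.
by rewrite realC_invn; field.
Qed.

Lemma qmutual_info_measureA_OT : qmutual_info (measureA (proj psi)) = vN_entropy rhoB.
Proof. exact: qmutual_info_measureA_uniform OT_embedding_normed OT_embedding_marg1. Qed.

Lemma qmutual_info_measureB_OT : qmutual_info (measureB (proj psi)) = vN_entropy rhoA.
Proof. exact: qmutual_info_measureB_uniform OT_embedding_normed OT_embedding_marg2. Qed.

Lemma OT_embedding_mulC x a x' b :
  psi (x, a) * (psi (x', b))^* =
  if ot_valid x a && ot_valid x' b then 8^-1 * (phase x a * (phase x' b)^*) else 0.
Proof.
rewrite regular_embedding_mulC !P_OTE.
have sqrt0 : sqrt 0 = 0 := sqrt_0.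
case: (ot_valid x a); case: (ot_valid x' b) => /=; last 3 first.
- by rewrite sqrt0 mulr0 rmorph0 mulr0.
- by rewrite sqrt0 mul0r rmorph0 mulr0.
- by rewrite sqrt0 mul0r rmorph0 mulr0.
have inv8_ge0 : 0 <= 8^-1 :> R by rewrite invr_ge0.
by rewrite -RmultE sqrt_sqrt; [rewrite realC_invn mulrC | exact/RleP].
Qed.

Lemma rhoB_diag a : rhoB a a = 4^-1.
Proof. by rewrite -realC_invn -(OT_embedding_marg2 a). Qed.

Lemma rhoB_same_choice a b : a.1 = b.1 -> a != b -> rhoB a b = 0.
Proof.
case: a b => [c y] [c' y'] /= <- yy'; apply: big1 => x _.
rewrite /proj OT_embedding_mulC /ot_valid /=.
by case: eqP => [yE|//]; case: eqP => [y'E|//]; rewrite yE y'E eqxx in yy'.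
Qed.

Lemma rhoB_cross a b : a.1 != b.1 -> rhoB a b * rhoB b a = 64^-1.
Proof.
have split_phases (u v : R[i]) :
  8^-1 * (u * v^*) * (8^-1 * (v * u^*)) = 64^-1 * (u * u^*) * (v * v^*) by field.
case: a b => [[] []] [[] []] //= _; rewrite /ptraceA /proj !sum_bool2 !OT_embedding_mulC /=;
  by rewrite ?add0r ?addr0 split_phases !phase_unit !mulr1.
Qed.

Lemma centered_rhoB_same_choice a b : a.1 = b.1 -> K a b = 0.
Proof.
move=> same; rewrite /opaffine mul1r; have [<-|ab] := eqVneq a b.
  by rewrite rhoB_diag mulr1 subrr.
by rewrite rhoB_same_choice // mulr0 subrr.
Qed.

Lemma centered_rhoB_cross a b : a.1 != b.1 -> K a b = rhoB a b.
Proof.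
move=> cross; rewrite /opaffine mul1r; case: eqVneq => [ab|_]; last by rewrite mulr0 subr0.
by rewrite ab eqxx in cross.
Qed.

Lemma centered_rhoB_trace : \sum_t K t t = 0.
Proof. by apply: big1 => t _; rewrite centered_rhoB_same_choice. Qed.

Lemma centered_rhoB_trace2 : \sum_t opmul K K t t = 8^-1.
Proof.
have KK t s : K t s * K s t = if t.1 == s.1 then 0 else 64^-1.
  case: eqP => [same|/eqP cross]; first by rewrite centered_rhoB_same_choice ?mul0r.
  have cross' : s.1 != t.1 by rewrite eq_sym.
  by rewrite (centered_rhoB_cross cross) (centered_rhoB_cross cross'); apply: rhoB_cross.
rewrite /opmul (eq_bigr _ (fun t _ => eq_bigr _ (fun s _ => KK t s))).
by rewrite !sum_bool2 /=; field.
Qed.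

(* Three choice bits cannot be pairwise distinct. *)
Lemma centered_rhoB_trace3 : \sum_t opmul (opmul K K) K t t = 0.
Proof.
apply: big1 => t _; rewrite /opmul; apply: big1 => u _; rewrite mulr_suml; apply: big1 => s _.
case: (eqVneq t.1 s.1) => [same|ts]; first by rewrite centered_rhoB_same_choice // !mul0r.
case: (eqVneq s.1 u.1) => [same|su].
  by rewrite (centered_rhoB_same_choice same) mulr0 mul0r.
suff same : u.1 = t.1 by rewrite (centered_rhoB_same_choice same) mulr0.
by move: ts su; case: (t.1); case: (s.1); case: (u.1).
Qed.

Lemma half_sub_rhoB_gram :
  opaffine (-1) (- 2^-1) rhoB =2 gram (fun a x => (if a.1 then -1 else 1) * psi (x, a)).
Proof.
move=> a b; set sg := fun c : bool * bool => (if c.1 then -1 else 1) : R[i].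
have sg_real c : (sg c)^* = sg c by rewrite /sg; case: ifP; rewrite ?rmorphN1 ?rmorph1.
have -> : gram (fun c x => sg c * psi (x, c)) a b = sg a * sg b * rhoB a b.
  rewrite /gram /ptraceA /proj mulr_sumr; apply: eq_bigr => x _.
  by rewrite rmorphM /= sg_real mulrACA.
rewrite /opaffine; have [<-|ab] := eqVneq a b.
  by rewrite rhoB_diag /= mulr1n /sg; case: ifP => _; field.
rewrite /= mulr0n mulr0 subr0.
have [same|cross] := eqVneq a.1 b.1; first by rewrite rhoB_same_choice // !mulr0.
by move: cross; rewrite /sg; case: (a.1); case: (b.1) => //= _; ring.
Qed.

Lemma vN_entropy_rhoB_ge : 3 / 2 <= vN_entropy rhoB.
Proof.
apply: (vN_entropy_ge_three_halves (f := fun a x => psi (x, a))) => //.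
- by rewrite card_prod card_bool.
- exact: centered_rhoB_trace.
- exact: centered_rhoB_trace2.
- exact: half_sub_rhoB_gram.
- exact: centered_rhoB_trace3.
Qed.

End OTEmbedding.

Section CanonicalEmbedding.
Local Notation psi0 := (regular_embedding P_OT (fun _ _ => 0)).
Local Notation KA := (opaffine 1 4^-1 (ptraceB (proj psi0))).
Local Notation KB := (opaffine 1 4^-1 (ptraceA (proj psi0))).

Lemma canonical_embedding_mulC x a x' b :
  psi0 (x, a) * (psi0 (x', b))^* = if ot_valid x a && ot_valid x' b then 8^-1 else 0.
Proof.
have phase0 : (cos 0 +i* sin 0)%C = 1 :> R[i] by rewrite cos_0 sin_0.
by rewrite OT_embedding_mulC /= phase0 rmorph1 !mulr1.
Qed.

Lemma canonical_centered_rhoB a b : KB a b = if a.1 == b.1 then 0 else 8^-1.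
Proof.
case: eqVneq => [same|cross]; first exact: centered_rhoB_same_choice.
rewrite centered_rhoB_cross // /ptraceA /proj sum_bool2 !canonical_embedding_mulC.
by move: cross; case: a b => [[] []] [[] []] //= _; field.
Qed.

Lemma canonical_centered_rhoA x x' :
  KA x x' = if (x.1 == x'.1) != (x.2 == x'.2) then 8^-1 else 0.
Proof.
rewrite /opaffine /ptraceB /proj sum_bool2 !canonical_embedding_mulC.
by case: x x' => [[] []] [[] []] /=; field.
Qed.

Lemma canonical_centered_rhoB_cube : opmul (opmul KB KB) KB =2 (fun a b => 16^-1 * KB a b).
Proof.
move=> a b; rewrite /opmul !sum_bool2 !canonical_centered_rhoB.
by case: a b => [[] []] [[] []] /=; field.
Qed.

Lemma canonical_centered_rhoA_cube : opmul (opmul KA KA) KA =2 (fun x x' => 16^-1 * KA x x').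
Proof.
move=> x x'; rewrite /opmul !sum_bool2 !canonical_centered_rhoA.
by case: x x' => [[] []] [[] []] /=; field.
Qed.

Lemma vN_entropy_canonical_rhoB : vN_entropy (ptraceA (proj psi0)) = 3 / 2.
Proof.
apply: (vN_entropy_eq_three_halves (f := fun a x => psi0 (x, a))) => //.
- by rewrite card_prod card_bool.
- exact: centered_rhoB_trace.
- exact: centered_rhoB_trace2.
- exact: canonical_centered_rhoB_cube.
Qed.

Lemma vN_entropy_canonical_rhoA : vN_entropy (ptraceB (proj psi0)) = 3 / 2.
Proof.
apply: (vN_entropy_eq_three_halves (f := fun x y => psi0 (x, y))) => //.
- by rewrite card_prod card_bool.
- by rewrite sum_bool2 !canonical_centered_rhoA /=; field.
- by rewrite /opmul !sum_bool2 !canonical_centered_rhoA /=; field.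
- exact: canonical_centered_rhoA_cube.
Qed.

End CanonicalEmbedding.

Theorem theorem7 :
  (forall theta : bool * bool -> bool * bool -> R,
      1 / 2 <= leakage P_OT (regular_embedding P_OT theta)) /\
  (forall theta : bool * bool -> bool * bool -> R,
      leakage P_OT (regular_embedding P_OT (fun _ _ => 0))
        <= leakage P_OT (regular_embedding P_OT theta)).
Proof.
have leakage_ge theta : 1 / 2 <= leakage P_OT (regular_embedding P_OT theta).
  rewrite /leakage le_max qmutual_info_measureA_OT mutual_info_P_OT.
  by apply/orP; left; have := vN_entropy_rhoB_ge theta; lra.
split=> // theta; apply: le_trans (leakage_ge theta).
rewrite /leakage qmutual_info_measureA_OT qmutual_info_measureB_OT.
rewrite vN_entropy_canonical_rhoB vN_entropy_canonical_rhoA mutual_info_P_OT maxxx.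
lra.
Qed.
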